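(* Let $I$ be an instance of SPA-S (defined in the context), and let $\mathcal{M}$ be the set of all stable matchings of $I$, partially ordered by the student-oriented dominance relation $\preceq$. Then $(\mathcal{M},\preceq)$ is a distributive lattice. For $M,M'\in\mathcal{M}$, the meet of $M$ and $M'$ is the assignment $M\land M'$ and the join is the assignment $M\lor M'$, where $M\land M'$ and $M\lor M'$ are defined in the context; in particular both are stable matchings of $I$.
   Context: An instance $I$ of SPA-S consists of a finite set $\mathcal{S}$ of students, a finite set $\mathcal{P}$ of projects and a finite set $\mathcal{L}$ of lecturers. Each student $s_i$ ranks a subset $A_i\subseteq\mathcal{P}$ (its acceptable projects) in strict order. Each project is offered by exactly one lecturer; lecturer $l_k$ offers a nonempty set $P_k\subseteq\mathcal{P}$, and the sets $P_k$ partition $\mathcal{P}$. Each lecturer $l_k$ ranks in strict order the students who find at least one project of $P_k$ acceptable. Each project $p_j$ has capacity $c_j\in\mathbb{Z}^+$ and each lecturer $l_k$ has capacity $d_k\in\mathbb{Z}^+$ with $\max\{c_j:p_j\in P_k\}\le d_k\le\sum\{c_j:p_j\in P_k\}$. A pair $(s_i,p_j)$ with $p_j$ offered by $l_k$ is acceptable if $p_j\in A_i$ and $s_i$ is on $l_k$'s list. A matching $M$ is a set of acceptable pairs such that each student is in at most one pair, $|M(p_j)|\le c_j$ for each project and $|M(l_k)|\le d_k$ for each lecturer, where $M(s_i)$ is the project of $s_i$, $M(p_j)$ is the set of students assigned to $p_j$, and $M(l_k)$ is the set of students assigned to projects in $P_k$. A project (lecturer) is undersubscribed/full in $M$ if the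 number of its assigned students is less than/equal to its capacity. An acceptable pair $(s_i,p_j)\notin M$, with $p_j$ offered by $l_k$, blocks $M$ if ($s_i$ is unassigned in $M$ or $s_i$ prefers $p_j$ to $M(s_i)$) and one of the following holds: (P1) $p_j$ and $l_k$ are both undersubscribed in $M$; (P2) $p_j$ is undersubscribed, $l_k$ is full and $s_i\in M(l_k)$; (P3) $p_j$ is undersubscribed, $l_k$ is full and $l_k$ prefers $s_i$ to the worst student in $M(l_k)$; (P4) $p_j$ is full and $l_k$ prefers $s_i$ to the worst student in $M(p_j)$. $M$ is stable if no pair blocks it. A student $s_i$ prefers $M$ to $M'$ if $s_i$ is assigned in both and prefers $M(s_i)$ to $M'(s_i)$; $s_i$ is indifferent if unassigned in both or $M(s_i)=M'(s_i)$. For stable $M,M'$, $M\preceq M'$ means every student prefers $M$ to $M'$ or is indifferent between them. For stable matchings $M,M'$, $M\land M'$ assigns each student unassigned in both to nothing, each student assigned to the same project in both to that project, and every other student to the better (in her preference) of her projects in $M$ and $M'$; $M\lor M'$ is defined identically but with the worse of the two projects. *)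

From mathcomp Require Import all_boot all_order.
Set Implicit Arguments. Unset Strict Implicit. Unset Printing Implicit Defensive.

(* A student's strict preference list over her acceptable projects is given
   by an acceptability predicate and a rank function injective on it
   (smaller rank = more preferred).  Likewise for lecturers. *)
Record spa_instance (S P L : finType) := SpaInstance {
  sacc : S -> P -> bool;
  srank : S -> P -> nat;
  srank_inj : forall s, {in sacc s &, injective (srank s)};
  lec : P -> L;
  lec_nonempty : forall l : L, exists p, lec p = l;
  lrank : L -> S -> nat;
  lrank_inj : forall l, {in [pred s | [exists p, (lec p == l) && sacc s p]] &,
                           injective (lrank l)};
  pcap : P -> nat;
  lcap : L -> nat;
  pcap_pos : forall p, 0 < pcap p;
  lcap_pos : forall l, 0 < lcap l;
  lcap_ge : forall p, pcap p <= lcap (lec p);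
  lcap_le : forall l, lcap l <= \sum_(p | lec p == l) pcap p
}.

Section SPAS.
Variables (S P L : finType) (I : spa_instance S P L).

Definition on_list (l : L) (s : S) : bool :=
  [exists p, (lec I p == l) && sacc I s p].

Definition acceptable (s : S) (p : P) : bool :=
  sacc I s p && on_list (lec I p) s.

Definition sprefers (s : S) (p q : P) : bool := srank I s p < srank I s q.
Definition lprefers (l : L) (s t : S) : bool := lrank I l s < lrank I l t.

(* An assignment: each student is in at most one pair. *)
Definition assignment := {ffun S -> option P}.

Definition Mp (M : assignment) (p : P) : {set S} := [set s | M s == Some p].
Definition Ml (M : assignment) (l : L) : {set S} :=
  [set s | if M s is Some p then lec I p == l else false].

Definition matching (M : assignment) : Prop :=
  [/\ forall s p, M s = Some p -> acceptable s p,
      forall p, #|Mp M p| <= pcap I p &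
      forall l, #|Ml M l| <= lcap I l].

Definition p_under M p := #|Mp M p| < pcap I p.
Definition p_full M p := #|Mp M p| == pcap I p.
Definition l_under M l := #|Ml M l| < lcap I l.
Definition l_full M l := #|Ml M l| == lcap I l.

(* l prefers s to the worst student of X (X nonempty in every use) *)
Definition prefers_to_worst (l : L) (s : S) (X : {set S}) : bool :=
  [exists t in X, lprefers l s t].

Definition blocks (M : assignment) (s : S) (p : P) : bool :=
  let l := lec I p in
  [&& acceptable s p, M s != Some p,
      (if M s is Some q then sprefers s p q else true) &
      [|| p_under M p && l_under M l,
          [&& p_under M p, l_full M l & s \in Ml M l],
          [&& p_under M p, l_full M l & prefers_to_worst l s (Ml M l)]
        | p_full M p && prefers_to_worst l s (Mp M p)]].

Definition stable (M : assignment) : Prop :=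
  matching M /\ forall s p, ~~ blocks M s p.

Definition sprefers_opt (s : S) (o o' : option P) : bool :=
  match o, o' with Some p, Some q => sprefers s p q | _, _ => false end.

Definition sdom (M M' : assignment) : Prop :=
  forall s, sprefers_opt s (M s) (M' s) || (M s == M' s).

(* better / worse of two options for student s; in the (for stable
   matchings impossible) case that s is assigned in exactly one of them,
   being assigned counts as better. *)
Definition better_opt (s : S) (o o' : option P) : option P :=
  match o, o' with
  | Some p, Some q => if srank I s p <= srank I s q then Some p else Some q
  | Some p, None => Some p
  | None, o' => o'
  end.
Definition worse_opt (s : S) (o o' : option P) : option P :=
  match o, o' with
  | Some p, Some q => if srank I s p <= srank I s q then Some q else Some p
  | _, _ => None
  end.

Definition meet (M M' : assignment) : assignment :=
  [ffun s => better_opt s (M s) (M' s)].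
Definition join (M M' : assignment) : assignment :=
  [ffun s => worse_opt s (M s) (M' s)].

End SPAS.

(* Compare two stable matchings M and M' through the sets B and B' of students
   better off in M and in M'.  A student of B holds in M a project whose
   lecturer, by stability of M', prefers to her every student that project has
   in M'; if the project is undersubscribed in M', the lecturer is full in M'
   and prefers to her all its students in M'.  From this, for every lecturer l,
   the students of B that l has in M plus those of B' that l has in M' are at
   most the students of B that l has in M' plus those of B' that l has in M.
   Summed over the lecturers the left side is |B| + |B'| and the right side
   only counts the students of B assigned in M' and of B' assigned in M, so
   every inequality is an equality.  Hence the same students are assigned in
   M and M', every lecturer has the same number of students, and at every
   project all the students better off in one of the matchings are better off
   in the same one.  These facts show that the pointwise best (worst) choice of
   projects respects all capacities and is again unblocked, while
   distributivity is the distributivity of min over max on ranks. *)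

From mathcomp Require Import all_boot all_order.
From mathcomp Require Import zify.
Set Implicit Arguments. Unset Strict Implicit. Unset Printing Implicit Defensive.

Lemma sum_leq_eq (J : finType) (P : pred J) (f g : J -> nat) :
  (forall i, P i -> f i <= g i) -> \sum_(i | P i) g i <= \sum_(i | P i) f i ->
  forall i, P i -> f i = g i.
Proof.
move=> le_fg le_sum i Pi; apply/eqP.
have /geq_leqif := leqif_sum (fun j Pj => leqif_eq (le_fg j Pj)).
by rewrite le_sum => /esym/forall_inP; apply.
Qed.

Lemma sum_card_Some (T Y : finType) (f : T -> option Y) (A : {set T}) :
  \sum_(y : Y) #|[set x in A | f x == Some y]| = #|[set x in A | f x != None]|.
Proof.
rewrite -sum1dep_card.
under eq_bigr => y _ do rewrite -sum1dep_card big_mkcond /=.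
rewrite exchange_big /= [RHS]big_mkcond /=; apply: eq_bigr => x _.
case: (x \in A) => /=; last by rewrite big1.
case: (f x) => [y0|] /=; last by rewrite big1.
rewrite (bigD1 y0) //= eqxx big1 // => y hy.
by case: ifP => // /eqP [e]; rewrite e eqxx in hy.
Qed.

Section SPAS.
Variables (S P L : finType) (I : spa_instance S P L).
Implicit Types (M N K : assignment S P) (s t : S) (p q : P) (l : L) (T : {set S}).

Lemma in_Mp_Ml K p s : s \in Mp K p -> s \in Ml I K (lec I p).
Proof. by rewrite !inE => /eqP ->. Qed.

Lemma matching_acceptable K s p : matching I K -> K s = Some p -> acceptable I s p.
Proof. by case=> + _ _; apply. Qed.

Lemma Ml_on_list K l s : matching I K -> s \in Ml I K l -> on_list I l s.
Proof.
move=> mK; rewrite inE; case Ks: (K s) => [p|] // /eqP <-.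
by case/andP: (matching_acceptable mK Ks).
Qed.

Lemma lrank_anti l s t : on_list I l s -> on_list I l t ->
  lrank I l s <= lrank I l t -> lrank I l t <= lrank I l s -> s = t.
Proof. by move=> ls lt le_st le_ts; apply: (lrank_inj ls lt); apply/eqP; rewrite eqn_leq le_st. Qed.

Lemma srank_anti s p q : sacc I s p -> sacc I s q ->
  srank I s p <= srank I s q -> srank I s q <= srank I s p -> p = q.
Proof. by move=> sp sq le_pq le_qp; apply: (srank_inj sp sq); apply/eqP; rewrite eqn_leq le_pq. Qed.

Lemma card_Mp_full K p : matching I K -> ~~ p_under I K p -> #|Mp K p| = pcap I p.
Proof. by case=> _ cap _; rewrite /p_under -leqNgt => ge; apply/eqP; rewrite eqn_leq cap. Qed.

Lemma card_Ml_full K l : matching I K -> ~~ l_under I K l -> #|Ml I K l| = lcap I l.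
Proof. by case=> _ _ cap; rewrite /l_under -leqNgt => ge; apply/eqP; rewrite eqn_leq cap. Qed.

Lemma card_Ml_sum_Mp K T l :
  #|Ml I K l :&: T| = \sum_(p | lec I p == l) #|Mp K p :&: T|.
Proof.
rewrite big_mkcond /=.
have -> : #|Ml I K l :&: T| = #|[set s in Ml I K l :&: T | K s != None]|.
  by apply: eq_card => s; rewrite !inE; case: (K s) => [p|] /=; rewrite ?andbT ?andbF.
rewrite -sum_card_Some; apply: eq_bigr => p _.
case: ifP => lp.
  apply: eq_card => s; rewrite !inE.
  by case: eqP => [->|]; rewrite ?andbF //= lp andbT.
apply/eqP; rewrite cards_eq0; apply/eqP/setP => s; rewrite !inE.
by case: eqP => [->|]; rewrite ?andbF //= lp.
Qed.

Definition assigned K : {set S} := [set s | K s != None].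

Lemma sum_card_Ml K T : \sum_l #|Ml I K l :&: T| = #|T :&: assigned K|.
Proof.
have -> : #|T :&: assigned K| = #|[set s in T | omap (lec I) (K s) != None]|.
  by apply: eq_card => s; rewrite !inE; case: (K s); rewrite ?andbT ?andbF.
rewrite -sum_card_Some; apply: eq_bigr => l _; apply: eq_card => s; rewrite !inE.
by case: (K s) => //= [p|]; rewrite ?andbF // andbC.
Qed.

Definition prefers_over s p (o : option P) : bool :=
  if o is Some q then sprefers I s p q else true.

Lemma prefers_over_neq s p o : prefers_over s p o -> o != Some p.
Proof. by case: o => //= q; apply: contraTneq => -[->]; rewrite /sprefers ltnn. Qed.

Definition ranked_below l s T : Prop := forall t, t \in T -> lrank I l t <= lrank I l s.

Definition unblocked N s p : Prop :=
  let l := lec I p in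
  (p_under I N p -> [/\ ~~ l_under I N l, s \notin Ml I N l & ranked_below l s (Ml I N l)]) /\
  (~~ p_under I N p -> ranked_below l s (Mp N p)).

Lemma stable_unblocked N s p : stable I N -> acceptable I s p ->
  prefers_over s p (N s) -> unblocked N s p.
Proof.
case=> [[_ capp capl] nblock] acc pref.
move: (nblock s p); rewrite /blocks acc (prefers_over_neq pref) /=.
move: pref; rewrite /prefers_over => -> /=.
rewrite !negb_or => /and4P [nP1 nP2 nP3 nP4]; split=> [under|full].
- have lfull : ~~ l_under I N (lec I p) by move: nP1; rewrite under.
  have lfull' : l_full I N (lec I p) by rewrite /l_full eqn_leq capl leqNgt.
  split=> //; first by move: nP2; rewrite under lfull'.
  move=> t tl; move: nP3; rewrite under lfull' /= => /existsPn /(_ t).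
  by rewrite tl /lprefers -leqNgt.
- have pfull : p_full I N p by rewrite /p_full eqn_leq capp leqNgt.
  move=> t tp; move: nP4; rewrite pfull /= => /existsPn /(_ t).
  by rewrite tp /lprefers -leqNgt.
Qed.

Lemma unblocked_stable N : matching I N ->
  (forall s p, acceptable I s p -> prefers_over s p (N s) -> unblocked N s p) ->
  stable I N.
Proof.
move=> mN unbl; split=> // s p; apply/negP; rewrite /blocks => /and4P [acc _ pref blk].
have [unbl_under unbl_full] := unbl s p acc pref.
case: (boolP (p_under I N p)) blk => [under|full] /=.
- have [lfull sl below] := unbl_under under.
  rewrite (negbTE lfull) (negbTE sl) /p_full ltn_eqF //= andbF orbF.
  by case/andP=> _ /existsP [t /andP [tl]]; rewrite /lprefers ltnNge below.
- by case/andP=> _ /existsP [t /andP [tp]]; rewrite /lprefers ltnNge unbl_full.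
Qed.

(** * Comparing two matchings *)

Definition sbetter K K' s : bool :=
  match K s, K' s with
  | Some p, Some q => sprefers I s p q
  | Some _, None => true
  | None, _ => false
  end.

Definition better_off K K' : {set S} := [set s | sbetter K K' s].
Definition agree K K' : {set S} := [set s | K s == K' s].

Lemma sbetter_asym K K' s : sbetter K K' s -> ~~ sbetter K' K s.
Proof.
rewrite /sbetter; case: (K s) => [p|]; case: (K' s) => [q|] //.
by rewrite /sprefers -leqNgt => /ltnW.
Qed.

Lemma sbetter_neq K K' s : sbetter K K' s -> K s != K' s.
Proof.
rewrite /sbetter; case: (K s) => [p|]; case: (K' s) => [q|] //=.
by apply: contraTneq => -[->]; rewrite /sprefers ltnn.
Qed.

Lemma sbetter_eq K K' s : K s = K' s -> sbetter K K' s = false.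
Proof. by move=> eqs; apply/negP => /sbetter_neq; rewrite eqs eqxx. Qed.

Lemma sbetter_prefers_over K K' s p : sbetter K K' s -> K s = Some p -> prefers_over s p (K' s).
Proof. by rewrite /sbetter => + Ks; rewrite Ks; case: (K' s). Qed.

Lemma sbetter_assigned K K' s : sbetter K K' s -> K s != None.
Proof. by rewrite /sbetter; case: (K s). Qed.

Lemma sbetter_cases K K' s : matching I K -> matching I K' ->
  [\/ K s = K' s, sbetter K K' s | sbetter K' K s].
Proof.
move=> mK mK'; case b: (sbetter K K' s); first by constructor 2.
case b': (sbetter K' K s); first by constructor 3.
constructor 1; move: b b'; rewrite /sbetter.
case Ks: (K s) => [p|]; case K's: (K' s) => [q|] //.
rewrite /sprefers => /negbT; rewrite -leqNgt => le_qp /negbT; rewrite -leqNgt => le_pq.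
case/andP: (matching_acceptable mK Ks) => sp _.
case/andP: (matching_acceptable mK' K's) => sq _.
by rewrite (srank_anti sp sq le_pq le_qp).
Qed.

Lemma card_split K K' T : matching I K -> matching I K' ->
  #|T| = #|T :&: better_off K K'| + #|T :&: better_off K' K| + #|T :&: agree K K'|.
Proof.
move=> mK mK'.
rewrite -(cardsID (better_off K K') T) -addnA; congr addn.
rewrite -(cardsID (better_off K' K) (T :\: better_off K K')).
congr addn; apply: eq_card => s; rewrite !inE.
all: case: (sbetter_cases s mK mK') => [eqs|b|b].
all: rewrite ?(sbetter_eq eqs) ?(sbetter_eq (esym eqs)) ?eqs ?eqxx ?b.
all: rewrite ?(negbTE (sbetter_asym b)) ?(negbTE (sbetter_neq b)) ?andbF ?andbT //=.
by rewrite eq_sym (negbTE (sbetter_neq b)) andbF.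
Qed.

Lemma Mp_agree K K' p : Mp K p :&: agree K K' = Mp K' p :&: agree K K'.
Proof. by apply/setP => s; rewrite !inE; case: (K s =P K' s) => [->|]; rewrite ?andbF. Qed.

Lemma Ml_agree K K' l : Ml I K l :&: agree K K' = Ml I K' l :&: agree K K'.
Proof. by apply/setP => s; rewrite !inE; case: (K s =P K' s) => [->|]; rewrite ?andbF. Qed.

Lemma better_off_sub_assigned K K' : better_off K K' \subset assigned K.
Proof. by apply/subsetP => s; rewrite !inE; apply: sbetter_assigned. Qed.

Lemma Mp_better_offP N K K' p :
  reflect (exists s, N s = Some p /\ sbetter K K' s) (0 < #|Mp N p :&: better_off K K'|).
Proof.
rewrite card_gt0; apply: (iffP (set0Pn _)) => [[s]|[s [Ns b]]].
  by rewrite !inE => /andP [/eqP Ns b]; exists s.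
by exists s; rewrite !inE Ns eqxx.
Qed.

(* Otherwise (s, p) would block K'. *)
Lemma better_off_ranked_below K K' s p : matching I K -> stable I K' ->
  sbetter K K' s -> K s = Some p -> ranked_below (lec I p) s (Mp K' p).
Proof.
move=> mK sK' b Ks t tp.
have [unbl_under unbl_full] :=
  stable_unblocked sK' (matching_acceptable mK Ks) (sbetter_prefers_over b Ks).
case: (boolP (p_under I K' p)) => [under|full]; last exact: unbl_full.
by have [_ _ below] := unbl_under under; apply/below/in_Mp_Ml.
Qed.

Definition rejects K K' l : bool :=
  ~~ l_under I K' l &&
  [exists s0, [&& s0 \in Ml I K l, s0 \notin Ml I K' l &
      [forall t in Ml I K' l, lrank I l t <= lrank I l s0]]].

Lemma better_off_rejects K K' s p : matching I K -> stable I K' ->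
  sbetter K K' s -> K s = Some p -> p_under I K' p -> rejects K K' (lec I p).
Proof.
move=> mK sK' b Ks under.
have [unbl_under _] :=
  stable_unblocked sK' (matching_acceptable mK Ks) (sbetter_prefers_over b Ks).
have [lfull sl below] := unbl_under under.
rewrite /rejects lfull /=; apply/existsP; exists s.
by rewrite sl (@in_Mp_Ml _ p) ?inE ?Ks //=; apply/forall_inP.
Qed.

Lemma rejects_asym K K' l : matching I K -> matching I K' ->
  rejects K K' l -> ~~ rejects K' K l.
Proof.
move=> mK mK' /andP [_ /existsP [s0 /and3P [s0K s0K' /forall_inP below]]].
apply/negP => /andP [_ /existsP [t0 /and3P [t0K' t0K /forall_inP below']]].
have e : s0 = t0.
  apply: lrank_anti (Ml_on_list mK s0K) (Ml_on_list mK' t0K') _ _.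
    exact: below'.
  exact: below.
by rewrite e t0K' in s0K'.
Qed.

(* By [better_off_ranked_below] the lecturer of p would rank each of s and t
   no lower than the other, forcing s = t. *)
Lemma better_off_project_excl K K' s t p : stable I K -> stable I K' ->
  K s = Some p -> sbetter K K' s -> K' t = Some p -> sbetter K' K t -> False.
Proof.
move=> sK sK' Ks b K't b'.
have ts : lrank I (lec I p) t <= lrank I (lec I p) s.
  by apply: (better_off_ranked_below sK.1 sK' b Ks); rewrite inE K't.
have st : lrank I (lec I p) s <= lrank I (lec I p) t.
  by apply: (better_off_ranked_below sK'.1 sK b' K't); rewrite inE Ks.
have ls : on_list I (lec I p) s by case/andP: (matching_acceptable sK.1 Ks).
have lt : on_list I (lec I p) t by case/andP: (matching_acceptable sK'.1 K't).
by move: b'; rewrite -(lrank_anti ls lt st ts) (negbTE (sbetter_asym b)).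
Qed.

(** * Counting the students better off in one of two stable matchings *)

Lemma better_off_project_full M M' p : stable I M -> stable I M' ->
  ~~ rejects M M' (lec I p) -> 0 < #|Mp M p :&: better_off M M'| ->
  #|Mp M' p :&: better_off M' M| = 0 /\ #|Mp M' p| = pcap I p.
Proof.
move=> sM sM' nrej /Mp_better_offP [x [Mx bx]]; split.
  apply/eqP; rewrite eqn0Ngt; apply/Mp_better_offP => -[y [M'y by']].
  exact: better_off_project_excl sM sM' Mx bx M'y by'.
apply: card_Mp_full sM'.1 _; apply: contra nrej.
exact: better_off_rejects sM.1 sM' bx Mx.
Qed.

Lemma rejects_project_full M M' p : stable I M -> stable I M' ->
  rejects M M' (lec I p) -> 0 < #|Mp M' p :&: better_off M' M| ->
  #|Mp M p :&: better_off M M'| = 0 /\ #|Mp M p| = pcap I p.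
Proof. by move=> sM sM' /(rejects_asym sM.1 sM'.1); apply: better_off_project_full. Qed.

Lemma rejects_le M M' l : stable I M -> stable I M' -> rejects M M' l ->
  #|Ml I M l| <= #|Ml I M' l| /\
  forall p, lec I p == l -> #|Mp M' p :&: better_off M' M| <= #|Mp M p :&: better_off M' M|.
Proof.
move=> sM sM' rej; split.
  by case/andP: rej => lfull _; rewrite (card_Ml_full sM'.1 lfull); case: sM.1.
move=> p /eqP lp; have [->//|pos] := posnP #|Mp M' p :&: better_off M' M|.
have rejp : rejects M M' (lec I p) by rewrite lp.
have [x0 fullp] := rejects_project_full sM sM' rejp pos.
have := card_split (Mp M p) sM.1 sM'.1; have := card_split (Mp M' p) sM.1 sM'.1.
rewrite Mp_agree; case: sM'.1 => _ capp _; have := capp p; lia.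
Qed.

Lemma lecturer_le_of_rejects M M' l : stable I M -> stable I M' -> rejects M M' l ->
  #|Ml I M l :&: better_off M M'| + #|Ml I M' l :&: better_off M' M| <=
  #|Ml I M' l :&: better_off M M'| + #|Ml I M l :&: better_off M' M|.
Proof.
move=> sM sM' rej; have [card_le proj_le] := rejects_le sM sM' rej.
have := leq_sum (index_enum P) proj_le; rewrite -!card_Ml_sum_Mp.
have := card_split (Ml I M l) sM.1 sM'.1; have := card_split (Ml I M' l) sM.1 sM'.1.
rewrite Ml_agree; lia.
Qed.

Lemma project_le M M' p : stable I M -> stable I M' ->
  ~~ rejects M M' (lec I p) -> ~~ rejects M' M (lec I p) ->
  #|Mp M p :&: better_off M M'| + #|Mp M' p :&: better_off M' M| <=
  #|Mp M' p :&: better_off M M'| + #|Mp M p :&: better_off M' M|.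
Proof.
move=> sM sM' nrej nrej'.
have := card_split (Mp M p) sM.1 sM'.1; have := card_split (Mp M' p) sM.1 sM'.1.
rewrite Mp_agree; case: sM.1 sM'.1 => _ capp _ [_ capp' _].
have := capp p; have := capp' p.
have [x0|pos] := posnP #|Mp M p :&: better_off M M'|.
  have [y0|pos'] := posnP #|Mp M' p :&: better_off M' M|; first by lia.
  have [] := better_off_project_full sM' sM nrej' pos'; lia.
have [] := better_off_project_full sM sM' nrej pos; lia.
Qed.

Lemma lecturer_le M M' l : stable I M -> stable I M' ->
  #|Ml I M l :&: better_off M M'| + #|Ml I M' l :&: better_off M' M| <=
  #|Ml I M' l :&: better_off M M'| + #|Ml I M l :&: better_off M' M|.
Proof.
move=> sM sM'.
case rej: (rejects M M' l); first exact: lecturer_le_of_rejects.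
case rej': (rejects M' M l); first by have := lecturer_le_of_rejects sM' sM rej'; lia.
rewrite !card_Ml_sum_Mp -!big_split /=; apply: leq_sum => p /eqP lp.
by apply: project_le; rewrite // lp ?rej ?rej'.
Qed.

Lemma lecturer_balance M M' l : stable I M -> stable I M' ->
  #|Ml I M l :&: better_off M M'| + #|Ml I M' l :&: better_off M' M| =
  #|Ml I M' l :&: better_off M M'| + #|Ml I M l :&: better_off M' M|.
Proof.
move=> sM sM'.
pose lhs k := #|Ml I M k :&: better_off M M'| + #|Ml I M' k :&: better_off M' M|.
pose rhs k := #|Ml I M' k :&: better_off M M'| + #|Ml I M k :&: better_off M' M|.
apply: (@sum_leq_eq _ predT lhs rhs) => // [k _|]; first exact: lecturer_le.
rewrite !big_split /= !sum_card_Ml !(setIidPl (better_off_sub_assigned _ _)).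
by rewrite leq_add // subset_leq_card // subsetIl.
Qed.

Lemma better_off_sub_assigned_stable M M' : stable I M -> stable I M' ->
  better_off M M' \subset assigned M'.
Proof.
move=> sM sM'.
have : \sum_l (#|Ml I M l :&: better_off M M'| + #|Ml I M' l :&: better_off M' M|) =
       \sum_l (#|Ml I M' l :&: better_off M M'| + #|Ml I M l :&: better_off M' M|).
  by apply: eq_bigr => l _; apply: lecturer_balance.
rewrite !big_split /= !sum_card_Ml !(setIidPl (better_off_sub_assigned _ _)) => sum_eq.
have le : #|better_off M M' :&: assigned M'| <= #|better_off M M'|.
  by rewrite subset_leq_card ?subsetIl.
have le' : #|better_off M' M :&: assigned M| <= #|better_off M' M|.
  by rewrite subset_leq_card ?subsetIl.
apply/setIidPl/eqP; rewrite eqEcard subsetIl /=; lia.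
Qed.

Lemma stable_unassigned M M' s : stable I M -> stable I M' -> (M s == None) = (M' s == None).
Proof.
move=> sM sM'.
have sub := subsetP (better_off_sub_assigned_stable sM sM') s.
have sub' := subsetP (better_off_sub_assigned_stable sM' sM) s.
move: sub sub'; rewrite !inE /sbetter.
case: (M s) => [p|]; case: (M' s) => [q|] //; first by move=> /(_ isT).
by move=> _ /(_ isT).
Qed.

Lemma rejects_balance M M' l : stable I M -> stable I M' -> rejects M M' l ->
  #|Ml I M l| = #|Ml I M' l| /\
  forall p, lec I p == l -> #|Mp M' p :&: better_off M' M| = #|Mp M p :&: better_off M' M|.
Proof.
move=> sM sM' rej; have [card_le proj_le] := rejects_le sM sM' rej.
have bal := lecturer_balance l sM sM'.
have := card_split (Ml I M l) sM.1 sM'.1; have := card_split (Ml I M' l) sM.1 sM'.1.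
have := leq_sum (index_enum P) proj_le; rewrite Ml_agree -!card_Ml_sum_Mp => sum_le.
split; first by lia.
by move=> p lp; apply: (sum_leq_eq proj_le) => //; rewrite -!card_Ml_sum_Mp; lia.
Qed.

Lemma project_balance M M' p : stable I M -> stable I M' ->
  ~~ rejects M M' (lec I p) -> ~~ rejects M' M (lec I p) ->
  #|Mp M p :&: better_off M M'| + #|Mp M' p :&: better_off M' M| =
  #|Mp M' p :&: better_off M M'| + #|Mp M p :&: better_off M' M|.
Proof.
move=> sM sM' nrej nrej'.
have le q : lec I q == lec I p ->
    #|Mp M q :&: better_off M M'| + #|Mp M' q :&: better_off M' M| <=
    #|Mp M' q :&: better_off M M'| + #|Mp M q :&: better_off M' M|.
  by move=> /eqP lq; apply: project_le; rewrite ?lq.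
apply: (sum_leq_eq le) => //; rewrite !big_split /= -!card_Ml_sum_Mp.
by have := lecturer_balance (lec I p) sM sM'; lia.
Qed.

Lemma rejects_project_sides M M' p : stable I M -> stable I M' -> rejects M M' (lec I p) ->
  #|Mp M' p :&: better_off M' M| = #|Mp M p :&: better_off M' M| /\
  (0 < #|Mp M' p :&: better_off M' M| ->
     #|Mp M p :&: better_off M M'| = 0 /\ #|Mp M' p :&: better_off M M'| = 0).
Proof.
move=> sM sM' rej; have [_ bal] := rejects_balance sM sM' rej.
split=> [|pos]; first exact: bal.
have [x0 fullp] := rejects_project_full sM sM' rej pos.
have := card_split (Mp M p) sM.1 sM'.1; have := card_split (Mp M' p) sM.1 sM'.1.
have := bal p (eqxx _); rewrite Mp_agree; case: sM'.1 => _ capp _; have := capp p; lia.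
Qed.

Lemma project_sides M M' p : stable I M -> stable I M' ->
  ~~ rejects M M' (lec I p) -> ~~ rejects M' M (lec I p) ->
  #|Mp M p :&: better_off M M'| = #|Mp M' p :&: better_off M M'| /\
    #|Mp M' p :&: better_off M' M| = 0 /\ #|Mp M p :&: better_off M' M| = 0 \/
  #|Mp M' p :&: better_off M' M| = #|Mp M p :&: better_off M' M| /\
    #|Mp M p :&: better_off M M'| = 0 /\ #|Mp M' p :&: better_off M M'| = 0.
Proof.
move=> sM sM' nrej nrej'; have bal := project_balance sM sM' nrej nrej'.
have := card_split (Mp M p) sM.1 sM'.1; have := card_split (Mp M' p) sM.1 sM'.1.
rewrite Mp_agree; case: sM.1 sM'.1 => _ capp _ [_ capp' _].
have := capp p; have := capp' p.
have [x0|pos] := posnP #|Mp M p :&: better_off M M'|.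
  have [y0|pos'] := posnP #|Mp M' p :&: better_off M' M|; first by lia.
  have [] := better_off_project_full sM' sM nrej' pos'; lia.
have [] := better_off_project_full sM sM' nrej pos; lia.
Qed.

Definition favours K K' p : Prop :=
  forall s, K s = Some p \/ K' s = Some p -> ~~ sbetter K' K s.

Lemma favoursE K K' p : favours K K' p <->
  #|Mp K p :&: better_off K' K| = 0 /\ #|Mp K' p :&: better_off K' K| = 0.
Proof.
split=> [fav|[none none'] s Ks].
  split; apply/eqP; rewrite eqn0Ngt; apply/negP => /Mp_better_offP [s [Ks b]].
    by have := fav s (or_introl Ks); rewrite b.
  by have := fav s (or_intror Ks); rewrite b.
apply/negP => b.
have : 0 < #|Mp K p :&: better_off K' K| \/ 0 < #|Mp K' p :&: better_off K' K|.
  by case: Ks => Ks; [left | right]; apply/Mp_better_offP; exists s.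
lia.
Qed.

Lemma favours_either M M' p : stable I M -> stable I M' -> favours M M' p \/ favours M' M p.
Proof.
move=> sM sM'; rewrite !favoursE.
case rej: (rejects M M' (lec I p)); first by have := rejects_project_sides sM sM' rej; lia.
case rej': (rejects M' M (lec I p)); first by have := rejects_project_sides sM' sM rej'; lia.
by have := project_sides sM sM' (negbT rej) (negbT rej'); lia.
Qed.

Lemma favours_rejects M M' p : stable I M -> stable I M' -> favours M M' p ->
  #|Mp M p| < #|Mp M' p| -> rejects M M' (lec I p).
Proof.
move=> sM sM' /favoursE [none none'] lt.
case: (boolP (rejects M M' (lec I p))) => // nrej.
have := card_split (Mp M p) sM.1 sM'.1; have := card_split (Mp M' p) sM.1 sM'.1.
rewrite Mp_agree.
case rej': (rejects M' M (lec I p)); first by have := rejects_project_sides sM' sM rej'; lia.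
by have := project_sides sM sM' nrej (negbT rej'); lia.
Qed.

Lemma better_off_Mp_or_rejects M M' q : stable I M -> stable I M' ->
  0 < #|Mp M' q :&: better_off M M'| ->
  0 < #|Mp M q :&: better_off M M'| \/ rejects M M' (lec I q).
Proof.
move=> sM sM' pos; case: (boolP (rejects M M' (lec I q))) => [|nrej]; [by right | left].
case rej': (rejects M' M (lec I q)); first by have := rejects_project_sides sM' sM rej'; lia.
by have := project_sides sM sM' nrej (negbT rej'); lia.
Qed.

Lemma better_off_outranked M M' u q : stable I M -> stable I M' ->
  sbetter M M' u -> M' u = Some q ->
  exists2 x, x \in Ml I M (lec I q) & lrank I (lec I q) u <= lrank I (lec I q) x.
Proof.
move=> sM sM' bu M'u.
have pos : 0 < #|Mp M' q :&: better_off M M'| by apply/Mp_better_offP; exists u.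
case: (better_off_Mp_or_rejects sM sM' pos) => [/Mp_better_offP [x [Mx bx]]|].
  exists x; first by apply: in_Mp_Ml; rewrite inE Mx.
  by apply: (better_off_ranked_below sM.1 sM' bx Mx); rewrite inE M'u.
case/andP=> _ /existsP [s0 /and3P [s0M _ /forall_inP below]].
by exists s0 => //; apply/below/in_Mp_Ml; rewrite inE M'u.
Qed.

Lemma card_Ml_stable M M' l : stable I M -> stable I M' -> #|Ml I M l| = #|Ml I M' l|.
Proof.
move=> sM sM'.
case rej: (rejects M M' l); first by case: (rejects_balance sM sM' rej).
case rej': (rejects M' M l); first by case: (rejects_balance sM' sM rej').
rewrite -(setIT (Ml I M l)) -(setIT (Ml I M' l)) !card_Ml_sum_Mp.
apply: eq_bigr => p /eqP lp; rewrite !setIT.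
have := card_split (Mp M p) sM.1 sM'.1; have := card_split (Mp M' p) sM.1 sM'.1.
have := project_sides sM sM' (p := p); rewrite lp rej rej' => /(_ isT isT).
by rewrite Mp_agree; lia.
Qed.

Lemma card_Ml_better_off M M' l : stable I M -> stable I M' ->
  #|Ml I M l :&: better_off M' M| = #|Ml I M' l :&: better_off M' M| /\
  #|Ml I M l :&: better_off M M'| = #|Ml I M' l :&: better_off M M'|.
Proof.
move=> sM sM'; have := lecturer_balance l sM sM'; have := card_Ml_stable l sM sM'.
have := card_split (Ml I M l) sM.1 sM'.1; have := card_split (Ml I M' l) sM.1 sM'.1.
rewrite Ml_agree; lia.
Qed.

(** * Meet and join *)

Lemma meetE M M' s : matching I M -> matching I M' ->
  meet I M M' s = if sbetter M' M s then M' s else M s.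
Proof.
move=> mM mM'; rewrite /meet ffunE /better_opt.
case: (sbetter_cases s mM mM') => [eqs|b|b].
- by rewrite sbetter_eq // -eqs; case: (M s) => // p; rewrite leqnn.
- rewrite (negbTE (sbetter_asym b)); move: b; rewrite /sbetter.
  by case: (M s) => [p|]; case: (M' s) => [q|] //= /ltnW ->.
- rewrite b; move: b; rewrite /sbetter.
  by case: (M s) => [p|]; case: (M' s) => [q|] //= lt; rewrite leqNgt [_ < _]lt.
Qed.

Lemma joinE M M' s : matching I M -> matching I M' ->
  join I M M' s = if sbetter M M' s then M' s else M s.
Proof.
move=> mM mM'; rewrite /join ffunE /worse_opt.
case: (sbetter_cases s mM mM') => [eqs|b|b].
- by rewrite sbetter_eq // -eqs; case: (M s) => // p; rewrite leqnn.
- rewrite b; move: b; rewrite /sbetter.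
  by case: (M s) => [p|]; case: (M' s) => [q|] //= /ltnW ->.
- rewrite (negbTE (sbetter_asym b)); move: b; rewrite /sbetter.
  by case: (M s) => [p|]; case: (M' s) => [q|] //= lt; rewrite leqNgt [_ < _]lt.
Qed.

Lemma meetC M M' : matching I M -> matching I M' -> meet I M M' = meet I M' M.
Proof.
move=> mM mM'; apply/ffunP => s; rewrite !meetE //.
case: (sbetter_cases s mM mM') => [eqs|b|b]; last by rewrite b (negbTE (sbetter_asym b)).
  by rewrite !sbetter_eq.
by rewrite b (negbTE (sbetter_asym b)).
Qed.

Lemma joinC M M' : matching I M -> matching I M' -> join I M M' = join I M' M.
Proof.
move=> mM mM'; apply/ffunP => s; rewrite !joinE //.
case: (sbetter_cases s mM mM') => [eqs|b|b]; last by rewrite b (negbTE (sbetter_asym b)).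
  by rewrite !sbetter_eq.
by rewrite b (negbTE (sbetter_asym b)).
Qed.

Lemma meet_pick M M' s : meet I M M' s = M s \/ meet I M M' s = M' s.
Proof.
rewrite /meet ffunE /better_opt.
by case: (M s) => [p|]; case: (M' s) => [q|]; try case: ifP; auto.
Qed.

Lemma join_pick M M' s : join I M M' s = M s \/ join I M M' s = M' s.
Proof.
rewrite /join ffunE /worse_opt.
by case: (M s) => [p|]; case: (M' s) => [q|]; try case: ifP; auto.
Qed.

Lemma prefers_over_meet M M' s p : prefers_over s p (meet I M M' s) ->
  prefers_over s p (M s) /\ prefers_over s p (M' s).
Proof.
rewrite /meet ffunE /better_opt /prefers_over /sprefers.
case: (M s) => [x|]; case: (M' s) => [y|] //=; case: ifP => le lt.
  by split=> //; apply: leq_trans lt le.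
by split=> //; apply: ltn_trans lt _; rewrite ltnNge le.
Qed.

Lemma Ml_pick N M M' l t : (forall s, N s = M s \/ N s = M' s) ->
  t \in Ml I N l -> t \in Ml I M l \/ t \in Ml I M' l.
Proof. by move=> pick; rewrite !inE; case: (pick t) => ->; auto. Qed.

Lemma card_Ml_meet M M' l : stable I M -> stable I M' ->
  #|Ml I (meet I M M') l| = #|Ml I M l|.
Proof.
move=> sM sM'; have [mM mM'] := (sM.1, sM'.1).
rewrite -(cardsID (better_off M' M) (Ml I (meet I M M') l)) -(cardsID (better_off M' M) (Ml I M l)).
have -> : Ml I (meet I M M') l :&: better_off M' M = Ml I M' l :&: better_off M' M.
  by apply/setP => s; rewrite !inE meetE //; case: (sbetter M' M s); rewrite ?andbF.
have -> : Ml I (meet I M M') l :\: better_off M' M = Ml I M l :\: better_off M' M.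
  by apply/setP => s; rewrite !inE meetE //; case: (sbetter M' M s).
by rewrite (card_Ml_better_off l sM sM').1.
Qed.

Lemma card_Ml_join M M' l : stable I M -> stable I M' ->
  #|Ml I (join I M M') l| = #|Ml I M l|.
Proof.
move=> sM sM'; have [mM mM'] := (sM.1, sM'.1).
rewrite -(cardsID (better_off M M') (Ml I (join I M M') l)) -(cardsID (better_off M M') (Ml I M l)).
have -> : Ml I (join I M M') l :&: better_off M M' = Ml I M' l :&: better_off M M'.
  by apply/setP => s; rewrite !inE joinE //; case: (sbetter M M' s); rewrite ?andbF.
have -> : Ml I (join I M M') l :\: better_off M M' = Ml I M l :\: better_off M M'.
  by apply/setP => s; rewrite !inE joinE //; case: (sbetter M M' s).
by rewrite (card_Ml_better_off l sM sM').2.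
Qed.

Lemma Mp_meet M M' p : matching I M -> matching I M' -> favours M M' p ->
  Mp (meet I M M') p = Mp M p.
Proof.
move=> mM mM' fav; apply/setP => s; rewrite !inE meetE //.
case: (boolP (sbetter M' M s)) => // b.
case: eqP => [Ks|_]; first by have := fav s (or_intror Ks); rewrite b.
by case: eqP => // Ks; have := fav s (or_introl Ks); rewrite b.
Qed.

Lemma Mp_join M M' p : matching I M -> matching I M' -> favours M M' p ->
  Mp (join I M M') p = Mp M' p.
Proof.
move=> mM mM' fav; apply/setP => s; rewrite !inE joinE //.
case: (sbetter_cases s mM mM') => [eqs|b|b]; first by rewrite sbetter_eq // eqs.
  by rewrite b.
rewrite (negbTE (sbetter_asym b)).
case: eqP => [Ks|_]; first by have := fav s (or_introl Ks); rewrite b.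
by case: eqP => // Ks; have := fav s (or_intror Ks); rewrite b.
Qed.

Lemma Mp_join_favoured M M' p : matching I M -> matching I M' -> favours M' M p ->
  Mp (join I M M') p = Mp M p.
Proof. by move=> mM mM' fav; rewrite joinC // Mp_join. Qed.

Lemma favours_ranked_below M M' s p : stable I M -> stable I M' -> favours M M' p ->
  acceptable I s p -> prefers_over s p (M' s) -> p_under I M p ->
  s \notin Ml I M (lec I p) -> ranked_below (lec I p) s (Ml I M (lec I p)) ->
  s \notin Ml I M' (lec I p) /\ ranked_below (lec I p) s (Ml I M' (lec I p)).
Proof.
move=> sM sM' fav acc pref under sM_l below.
have [unbl_under _] := stable_unblocked sM' acc pref.
case: (boolP (p_under I M' p)) => [under'|full'].
  by have [_ sl below'] := unbl_under under'.
have lt : #|Mp M p| < #|Mp M' p| by rewrite (card_Mp_full sM'.1 full').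
have /andP [_ /existsP [s0 /and3P [s0M s0nM /forall_inP below0]]] :=
  favours_rejects sM sM' fav lt.
have s0s := below s0 s0M.
split=> [|t tl]; last exact: leq_trans (below0 t tl) s0s.
apply/negP => sl; have ss0 := below0 s sl.
have ls : on_list I (lec I p) s by case/andP: acc.
by rewrite -(lrank_anti ls (Ml_on_list sM.1 s0M) ss0 s0s) sl in s0nM.
Qed.

Lemma meet_unblocked M M' s p : stable I M -> stable I M' -> favours M M' p ->
  acceptable I s p -> prefers_over s p (meet I M M' s) -> unblocked (meet I M M') s p.
Proof.
move=> sM sM' fav acc /prefers_over_meet [pref pref']; have [mM mM'] := (sM.1, sM'.1).
have [unbl_under unbl_full] := stable_unblocked sM acc pref.
rewrite /unblocked /l_under /p_under card_Ml_meet // Mp_meet //.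
split=> [under|]; last exact: unbl_full.
have [lfull sl below] := unbl_under under.
have [sl' below'] := favours_ranked_below sM sM' fav acc pref' under sl below.
split=> //.
  by apply/negP => /(Ml_pick (meet_pick M M')) [] hs; [move: sl | move: sl']; rewrite hs.
by move=> t /(Ml_pick (meet_pick M M')) []; [apply: below | apply: below'].
Qed.

Lemma matching_meet M M' : stable I M -> stable I M' -> matching I (meet I M M').
Proof.
move=> sM sM'; have [mM mM'] := (sM.1, sM'.1); split.
- by move=> s p; case: (meet_pick M M' s) => ->;
    [apply: matching_acceptable mM | apply: matching_acceptable mM'].
- move=> p; case: (favours_either p sM sM') => fav.
    by rewrite Mp_meet //; case: mM.
  by rewrite meetC // Mp_meet //; case: mM'.
- by move=> l; rewrite card_Ml_meet //; case: mM.
Qed.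

Lemma meet_stable M M' : stable I M -> stable I M' -> stable I (meet I M M').
Proof.
move=> sM sM'; apply: unblocked_stable => [|s p]; first exact: matching_meet.
case: (favours_either p sM sM') => fav; first exact: meet_unblocked.
by rewrite meetC; [apply: meet_unblocked | case: sM | case: sM'].
Qed.

Lemma ranked_below_join M M' l s : stable I M -> stable I M' ->
  ranked_below l s (Ml I M' l) -> ranked_below l s (Ml I (join I M M') l).
Proof.
move=> sM sM' below t; have [mM mM'] := (sM.1, sM'.1).
rewrite inE joinE //; case: ifP => [_ tl|bt]; first by apply: below; rewrite inE.
case: (sbetter_cases t mM mM') => [eqt|b|b]; first by rewrite eqt => tl; apply: below; rewrite inE.
  by rewrite b in bt.
case Mt: (M t) => [q|] // /eqP lq.
have [x xl tx] := better_off_outranked sM' sM b Mt.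
by apply: leq_trans (below x _); rewrite -lq.
Qed.

Lemma ranked_below_join_l M M' l s : stable I M -> stable I M' ->
  ranked_below l s (Ml I M l) -> ranked_below l s (Ml I (join I M M') l).
Proof. by move=> sM sM'; rewrite joinC; [apply: ranked_below_join | case: sM | case: sM']. Qed.

Lemma join_unblocked_lecturer M M' s l : stable I M -> stable I M' -> ~~ sbetter M M' s ->
  ~~ l_under I M l -> s \notin Ml I M l -> ranked_below l s (Ml I M l) ->
  [/\ ~~ l_under I (join I M M') l, s \notin Ml I (join I M M') l &
      ranked_below l s (Ml I (join I M M') l)].
Proof.
move=> sM sM' b lfull sl below; have [mM mM'] := (sM.1, sM'.1).
split; last exact: ranked_below_join_l.
  by rewrite /l_under card_Ml_join.
by move: sl; rewrite !inE joinE // (negbTE b).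
Qed.

Lemma favours_card_Mp M M' p : matching I M -> matching I M' -> favours M M' p ->
  #|Mp M p| + #|Mp M' p :&: better_off M M'| = #|Mp M' p| + #|Mp M p :&: better_off M M'|.
Proof.
move=> mM mM' /favoursE [none none'].
have := card_split (Mp M p) mM mM'; have := card_split (Mp M' p) mM mM'.
rewrite Mp_agree; lia.
Qed.

Lemma join_unblocked_under M M' s p : stable I M -> stable I M' -> favours M M' p ->
  acceptable I s p -> ~~ sbetter M M' s -> prefers_over s p (M s) -> p_under I M' p ->
  [/\ ~~ l_under I (join I M M') (lec I p), s \notin Ml I (join I M M') (lec I p) &
      ranked_below (lec I p) s (Ml I (join I M M') (lec I p))].
Proof.
move=> sM sM' fav acc b pref under'; have [mM mM'] := (sM.1, sM'.1).
have [unbl_under unbl_full] := stable_unblocked sM acc pref.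
case: (boolP (p_under I M p)) => [under|full].
  by have [lfull sl below] := unbl_under under; apply: join_unblocked_lecturer.
have : 0 < #|Mp M p :&: better_off M M'|.
  have := favours_card_Mp mM mM' fav; rewrite (card_Mp_full mM full).
  by move: under'; rewrite /p_under; lia.
case/Mp_better_offP => x0 [Mx0 bx0].
have [unbl_under' _] :=
  stable_unblocked sM' (matching_acceptable mM Mx0) (sbetter_prefers_over bx0 Mx0).
have [lfull' _ below'] := unbl_under' under'.
have x0s : lrank I (lec I p) x0 <= lrank I (lec I p) s by apply: unbl_full; rewrite ?inE ?Mx0.
have belowN := ranked_below_join sM sM' below'.
split=> [||t /belowN tx0]; last exact: leq_trans tx0 x0s.
  by rewrite /l_under card_Ml_join // (card_Ml_stable _ sM sM').
apply/negP => /belowN sx0.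
have ls : on_list I (lec I p) s by case/andP: acc.
have lx0 : on_list I (lec I p) x0 by case/andP: (matching_acceptable mM Mx0).
by move: b; rewrite (lrank_anti ls lx0 sx0 x0s) bx0.
Qed.

Lemma join_unblocked_full M M' s p : stable I M -> stable I M' -> favours M M' p ->
  acceptable I s p -> prefers_over s p (M s) -> ~~ p_under I M' p ->
  ranked_below (lec I p) s (Mp M' p).
Proof.
move=> sM sM' fav acc pref full'; have [mM mM'] := (sM.1, sM'.1).
have [unbl_under unbl_full] := stable_unblocked sM acc pref.
case: (boolP (p_under I M p)) => [under|full] t tp.
  have lt : #|Mp M p| < #|Mp M' p| by rewrite (card_Mp_full mM' full').
  have /andP [_ /existsP [s0 /and3P [s0M _ /forall_inP below0]]] := favours_rejects sM sM' fav lt.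
  have [_ _ below] := unbl_under under.
  exact: leq_trans (below0 t (in_Mp_Ml tp)) (below s0 s0M).
case: (boolP (t \in Mp M p)) => [|tM]; first exact: unbl_full.
have M't : M' t = Some p by apply/eqP; rewrite inE in tp.
case: (sbetter_cases t mM mM') => [eqt|bt|bt].
- by move: tM; rewrite inE eqt M't eqxx.
- have : 0 < #|Mp M p :&: better_off M M'|.
    have : 0 < #|Mp M' p :&: better_off M M'| by apply/Mp_better_offP; exists t.
    have := favours_card_Mp mM mM' fav; rewrite (card_Mp_full mM full).
    by case: mM' => _ capp' _; have := capp' p; lia.
  case/Mp_better_offP => x0 [Mx0 bx0].
  apply: leq_trans (better_off_ranked_below mM sM' bx0 Mx0 tp) _.
  by apply: unbl_full; rewrite ?inE ?Mx0.
- by have := fav t (or_intror M't); rewrite bt.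
Qed.

Lemma join_unblocked M M' s p : stable I M -> stable I M' ->
  acceptable I s p -> ~~ sbetter M M' s -> prefers_over s p (M s) ->
  unblocked (join I M M') s p.
Proof.
move=> sM sM' acc b pref; have [mM mM'] := (sM.1, sM'.1).
case: (favours_either p sM sM') => fav.
  rewrite /unblocked /p_under Mp_join //; split.
    exact: join_unblocked_under.
  exact: (join_unblocked_full sM sM' fav acc pref).
have [unbl_under unbl_full] := stable_unblocked sM acc pref.
rewrite /unblocked /p_under Mp_join_favoured //; split=> // under.
by have [lfull sl below] := unbl_under under; apply: join_unblocked_lecturer.
Qed.

Lemma matching_join M M' : stable I M -> stable I M' -> matching I (join I M M').
Proof.
move=> sM sM'; have [mM mM'] := (sM.1, sM'.1); split.
- by move=> s p; case: (join_pick M M' s) => ->;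
    [apply: matching_acceptable mM | apply: matching_acceptable mM'].
- move=> p; case: (favours_either p sM sM') => fav.
    by rewrite Mp_join //; case: mM'.
  by rewrite Mp_join_favoured //; case: mM.
- by move=> l; rewrite card_Ml_join //; case: mM.
Qed.

Lemma join_stable M M' : stable I M -> stable I M' -> stable I (join I M M').
Proof.
move=> sM sM'; have [mM mM'] := (sM.1, sM'.1).
apply: unblocked_stable => [|s p acc]; first exact: matching_join.
case: (boolP (sbetter M M' s)) => b; last by rewrite joinE // (negbTE b); apply: join_unblocked.
rewrite joinC // joinE // (negbTE (sbetter_asym b)).
exact: join_unblocked (sbetter_asym b).
Qed.

(** * The dominance order *)

Lemma sdom_refl M : sdom I M M.
Proof. by move=> s; rewrite eqxx orbT. Qed.

Lemma sdom_anti M M' : sdom I M M' -> sdom I M' M -> M = M'.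
Proof.
move=> le le'; apply/ffunP => s; move: (le s) (le' s).
case: (M s) => [p|]; case: (M' s) => [q|] //=; rewrite /sprefers.
case/orP=> [lt|/eqP -> //]; case/orP=> [lt'|/eqP -> //].
by move: (ltn_trans lt lt'); rewrite ltnn.
Qed.

Lemma sprefers_opt_trans s o1 o2 o3 :
  sprefers_opt I s o1 o2 -> sprefers_opt I s o2 o3 -> sprefers_opt I s o1 o3.
Proof. by case: o1 o2 o3 => [p|] [q|] [r|] //=; apply: ltn_trans. Qed.

Lemma sdom_trans M1 M2 M3 : sdom I M1 M2 -> sdom I M2 M3 -> sdom I M1 M3.
Proof.
move=> le12 le23 s; move: (le12 s) (le23 s).
case/orP=> [lt12|/eqP ->]; case/orP=> [lt23|/eqP <-]; rewrite ?eqxx ?orbT //.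
by rewrite (sprefers_opt_trans lt12 lt23).
Qed.

Lemma sdom_meet_l M M' : stable I M -> stable I M' -> sdom I (meet I M M') M.
Proof.
move=> sM sM' s; rewrite meetE; [|by case: sM|by case: sM'].
case b: (sbetter M' M s); last by rewrite eqxx orbT.
move: b (stable_unassigned s sM sM'); rewrite /sbetter.
by case: (M' s) => [q|]; case: (M s) => [p|] //= ->.
Qed.

Lemma sdom_meet_r M M' : stable I M -> stable I M' -> sdom I (meet I M M') M'.
Proof. by move=> sM sM'; rewrite meetC; [apply: sdom_meet_l | case: sM | case: sM']. Qed.

Lemma sdom_meet_glb N M M' : sdom I N M -> sdom I N M' -> sdom I N (meet I M M').
Proof. by move=> leM leM' s; case: (meet_pick M M' s) => ->; [apply: leM | apply: leM']. Qed.

Lemma sdom_join_l M M' : stable I M -> stable I M' -> sdom I M (join I M M').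
Proof.
move=> sM sM' s; rewrite joinE; [|by case: sM|by case: sM'].
case b: (sbetter M M' s); last by rewrite eqxx orbT.
move: b (stable_unassigned s sM sM'); rewrite /sbetter.
by case: (M s) => [p|]; case: (M' s) => [q|] //= ->.
Qed.

Lemma sdom_join_r M M' : stable I M -> stable I M' -> sdom I M' (join I M M').
Proof. by move=> sM sM'; rewrite joinC; [apply: sdom_join_l | case: sM | case: sM']. Qed.

Lemma sdom_join_lub N M M' : sdom I M N -> sdom I M' N -> sdom I (join I M M') N.
Proof. by move=> leM leM' s; case: (join_pick M M' s) => ->; [apply: leM | apply: leM']. Qed.

Lemma better_opt_Some s p q : exists r, [/\ better_opt I s (Some p) (Some q) = Some r,
  r = p \/ r = q & srank I s r = minn (srank I s p) (srank I s q)].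
Proof. by rewrite /better_opt; case: leqP => le; [exists p | exists q]; split; auto; lia. Qed.

Lemma worse_opt_Some s p q : exists r, [/\ worse_opt I s (Some p) (Some q) = Some r,
  r = p \/ r = q & srank I s r = maxn (srank I s p) (srank I s q)].
Proof. by rewrite /worse_opt; case: leqP => le; [exists q | exists p]; split; auto; lia. Qed.

(* Stable matchings assign the same students, so pointwise the identity is the
   distributivity of min over max on the (injective) ranks. *)
Lemma meet_join_distr M1 M2 M3 : stable I M1 -> stable I M2 -> stable I M3 ->
  meet I M1 (join I M2 M3) = join I (meet I M1 M2) (meet I M1 M3).
Proof.
move=> sM1 sM2 sM3; apply/ffunP => s; rewrite !ffunE.
have u12 := stable_unassigned s sM1 sM2; have u13 := stable_unassigned s sM1 sM3.
case M1s: (M1 s) => [p1|]; case M2s: (M2 s) => [p2|]; case M3s: (M3 s) => [p3|];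
  rewrite M1s M2s M3s in u12 u13 => //.
have acc r : r = p1 \/ r = p2 \/ r = p3 -> sacc I s r.
  have accM M q : stable I M -> M s = Some q -> sacc I s q.
    by move=> [mM _] Ms; case/andP: (matching_acceptable mM Ms).
  by case=> [->|[->|->]]; [apply: accM sM1 M1s | apply: accM sM2 M2s | apply: accM sM3 M3s].
have [w [-> w23 rw]] := worse_opt_Some s p2 p3.
have [u [-> u1w ru]] := better_opt_Some s p1 w.
have [b2 [-> b12 rb2]] := better_opt_Some s p1 p2.
have [b3 [-> b13 rb3]] := better_opt_Some s p1 p3.
have [v [-> vb rv]] := worse_opt_Some s b2 b3.
congr Some; apply: srank_anti (acc u _) (acc v _) _ _.
- by case: u1w => ->; [left | case: w23 => ->; auto].
- by case: vb => ->; [case: b12 | case: b13] => ->; auto.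
- rewrite ru rv rb2 rb3 rw; lia.
- rewrite ru rv rb2 rb3 rw; lia.
Qed.

End SPAS.

Theorem theorem2 (S P L : finType) (I : spa_instance S P L) :
  (* ≼ is a partial order on the set of stable matchings *)
  ((forall M, stable I M -> sdom I M M) /\
      (forall M M', stable I M -> stable I M' ->
         sdom I M M' -> sdom I M' M -> M = M') /\
      (forall M1 M2 M3, stable I M1 -> stable I M2 -> stable I M3 ->
         sdom I M1 M2 -> sdom I M2 M3 -> sdom I M1 M3) /\
  (* meet and join are stable, and are the glb / lub *)
      (forall M M', stable I M -> stable I M' ->
         [/\ stable I (meet I M M'),
             sdom I (meet I M M') M, sdom I (meet I M M') M' &
             forall N, stable I N -> sdom I N M -> sdom I N M' ->
                       sdom I N (meet I M M')]) /\
      (forall M M', stable I M -> stable I M' ->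
         [/\ stable I (join I M M'),
             sdom I M (join I M M'), sdom I M' (join I M M') &
             forall N, stable I N -> sdom I M N -> sdom I M' N ->
                       sdom I (join I M M') N]) /\
  (* distributivity *)
      (forall M1 M2 M3, stable I M1 -> stable I M2 -> stable I M3 ->
         meet I M1 (join I M2 M3) = join I (meet I M1 M2) (meet I M1 M3))).
Proof.
split; first by move=> M _; apply: sdom_refl.
split; first by move=> M M' _ _; apply: sdom_anti.
split; first by move=> M1 M2 M3 _ _ _; apply: sdom_trans.
split.
  move=> M M' sM sM'; split; [exact: meet_stable | exact: sdom_meet_l | exact: sdom_meet_r |].
  by move=> N _; apply: sdom_meet_glb.
split; last exact: meet_join_distr.
move=> M M' sM sM'; split; [exact: join_stable | exact: sdom_join_l | exact: sdom_join_r |].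
by move=> N _; apply: sdom_join_lub.
Qed.
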